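(* Let $L$ be a Lelek fan with top $v$, let $W$ be a wedge in $L$, and let $L'\subseteq L$ be a subcontinuum that is a Lelek fan such that 1. $L'\cap W$ is a Lelek fan, and 2. there is a Cantor fan $C$ with $L'\cap W\subseteq C\subseteq W$. Then there is no retraction from $L$ onto $L'$.
   Context: A continuum is a nonempty compact connected metric space. A dendroid is an arcwise connected, hereditarily unicoherent continuum. A point $x$ of a dendroid $X$ is a ramification point if $x$ is the top (the branch point) of some simple triod in $X$. A fan is a dendroid with at most one ramification point; this point, if it exists, is called the top of the fan. For a fan $X$, a point $x$ is an end point of $X$ if $x$ is an end point of every arc in $X$ containing $x$; $E(X)$ denotes the set of end points of $X$. A fan $X$ with top $v$ is smooth if for every $x\in X$ and every sequence $x_n\to x$ in $X$, the arcs from $v$ to $x_n$ converge (in the Hausdorff metric) to the arc from $v$ to $x$. A Lelek fan is a smooth fan $X$ with $\mathrm{Cl}(E(X))=X$. A Cantor fan is a continuum homeomorphic to $\bigcup_{c\in C}A_c\subseteq\mathbb R^2$, where $C\subseteq[0,1]$ is the Cantor middle-third set and $A_c$ is the straight segment from $(\tfrac12,0)$ to $(c,1)$. If $L$ is a Lelek fan with top $v$, a subcontinuum $W\subseteq L$ is a wedge in $L$ if both $W$ and $(L\setminus W)\cup\{v\}$ are Lelek fans. A retraction from a space $X$ onto a subspace $Y$ is a continuous map $r:X\to Y$ with $r(y)=y$ for all $y\in Y$. *)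

From HB Require Import structures.
From mathcomp Require Import all_boot all_order all_algebra.
From mathcomp Require Import all_classical all_reals.
From mathcomp Require Import topology normedtype.
Set Implicit Arguments. Unset Strict Implicit. Unset Printing Implicit Defensive.
Import Order.TTheory GRing.Theory Num.Theory.
Import numFieldNormedType.Exports.
Local Open Scope classical_set_scope.
Local Open Scope ring_scope.

Section Fans.
Variable R : realType.

Definition homeo_sets {S U : topologicalType} (A : set S) (B : set U)
  (f : S -> U) (g : U -> S) : Prop :=
  [/\ {within A, continuous f}, {within B, continuous g},
      f @` A `<=` B, g @` B `<=` A &
      (forall x, A x -> g (f x) = x) /\ (forall y, B y -> f (g y) = y)].

Definition homeomorphic {S U : topologicalType} (A : set S) (B : set U) : Prop :=
  exists f g, homeo_sets A B f g.

Variable T : pseudoMetricType R.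

Definition arc_from (A : set T) (x y : T) : Prop :=
  exists (f : R -> T) (g : T -> R),
    homeo_sets (`[0, 1] : set R) A f g /\ f 0 = x /\ f 1 = y.

Definition arc (A : set T) : Prop := exists x y, arc_from A x y.

Definition arc_endpoint (A : set T) (x : T) : Prop := exists y, arc_from A x y.

Definition continuum (X : set T) : Prop :=
  X !=set0 /\ compact X /\ connected X.

Definition arcwise_connected (X : set T) : Prop :=
  forall x y, X x -> X y -> x <> y -> exists A, A `<=` X /\ arc_from A x y.

Definition hereditarily_unicoherent (X : set T) : Prop :=
  forall A B, A `<=` X -> B `<=` X -> continuum A -> continuum B ->
    connected (A `&` B).

Definition dendroid (X : set T) : Prop :=
  [/\ continuum X, arcwise_connected X & hereditarily_unicoherent X].

Definition ramification_point (X : set T) (x : T) : Prop :=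
  exists (A1 A2 A3 : set T) (y1 y2 y3 : T),
    [/\ A1 `|` A2 `|` A3 `<=` X,
        arc_from A1 x y1, arc_from A2 x y2, arc_from A3 x y3 &
        [/\ A1 `&` A2 = [set x], A1 `&` A3 = [set x] & A2 `&` A3 = [set x]]].

Definition fan (X : set T) : Prop :=
  dendroid X /\
  (forall x y, ramification_point X x -> ramification_point X y -> x = y).

Definition end_points (X : set T) : set T :=
  [set x | X x /\ forall A, A `<=` X -> arc A -> A x -> arc_endpoint A x].

Definition arc_in_from (X : set T) (v x : T) (B : set T) : Prop :=
  B `<=` X /\ ((x = v /\ B = [set v]) \/ (x <> v /\ arc_from B v x)).

Definition hausdorff_cvg (Bs : nat -> set T) (B : set T) : Prop :=
  forall e : R, 0 < e -> \forall n \near \oo,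
    (forall y, Bs n y -> exists z, B z /\ ball z e y) /\
    (forall z, B z -> exists y, Bs n y /\ ball z e y).

Definition smooth_fan (X : set T) (v : T) : Prop :=
  fan X /\
  forall (x : T) (u : nat -> T) (B : set T) (Bs : nat -> set T),
    X x -> (forall n, X (u n)) -> u @ \oo --> x ->
    arc_in_from X v x B -> (forall n, arc_in_from X v (u n) (Bs n)) ->
    hausdorff_cvg Bs B.

Definition lelek_fan_top (X : set T) (v : T) : Prop :=
  [/\ smooth_fan X v, ramification_point X v & closure (end_points X) = X].

Definition lelek_fan (X : set T) : Prop := exists v, lelek_fan_top X v.

Definition wedge (L W : set T) (v : T) : Prop :=
  [/\ W `<=` L, lelek_fan W & lelek_fan ((L `\` W) `|` [set v])].

Definition retraction (X Y : set T) (r : T -> T) : Prop :=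
  [/\ {within X, continuous r}, r @` X `<=` Y & forall y, Y y -> r y = y].

End Fans.

Definition cantor_approx (R : realType) : nat -> set R :=
  fix ca (n : nat) : set R :=
  match n with
  | 0 => `[0, 1]%classic
  | n.+1 => ((fun x => x / 3) @` ca n) `|`
            ((fun x => (x + 2) / 3) @` ca n)
  end.

Definition cantor_set (R : realType) : set R :=
  \bigcap_(n in [set: nat]) @cantor_approx R n.

(* union of segments from (1/2, 0) to (c, 1), c in the Cantor set *)
Definition cantor_fan_model (R : realType) : set (R * R) :=
  [set p | exists c t, [/\ @cantor_set R c, t \in `[0, 1]%R &
            p = ((1 - t) * 2^-1 + t * c, t)]].

Definition cantor_fan (R : realType) (T : pseudoMetricType R) (C : set T) : Prop :=
  homeomorphic (@cantor_fan_model R) C.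

(* Since the Cantor set is totally disconnected, a connected subset of the
   Cantor fan C that misses its top lies on a single leg and is a segment
   there.  The Lelek fan K = L' ∩ W ⊆ C contains an arc, hence a segment
   [al, be] of some leg c0, which we may assume avoids v.  Points of that
   segment lie outside the closed set (L \ W) ∪ {v}, so by compactness of
   [al, be] a retraction r : L -> L' maps the whole segment of every leg c
   near c0 into K, moving heights only slightly.  End points of K are dense,
   so there is one, e, near the middle of the segment of c0; its leg is mapped
   by r onto a segment of that same leg containing e = r e in its interior,
   and an interior point of an arc in K is not an end point of K. *)

From HB Require Import structures.
From mathcomp Require Import all_boot all_order all_algebra.
From mathcomp Require Import all_classical all_reals.
From mathcomp Require Import topology normedtype.
From mathcomp Require Import ring lra.
Set Implicit Arguments. Unset Strict Implicit. Unset Printing Implicit Defensive.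
Import Order.TTheory GRing.Theory Num.Theory.
Import numFieldNormedType.Exports.
Local Open Scope classical_set_scope.
Local Open Scope ring_scope.

Section CantorSet.
Variable R : realType.
Local Notation cantor := (@cantor_set R).

Lemma cantor_approx_itv n (c : R) : cantor_approx n c -> 0 <= c <= 1.
Proof.
elim: n c => [|n IH] c /=; first by rewrite in_itv.
by case=> -[x /IH /andP[x0 x1] <-]; apply/andP; split; lra.
Qed.

Lemma cantor_approx_interval_length n (c1 c2 : R) : c1 < c2 ->
  (forall c, c1 <= c <= c2 -> cantor_approx n c) -> (c2 - c1) * 3 ^+ n <= 1.
Proof.
elim: n c1 c2 => [|n IH] c1 c2 c12 sub.
  have /cantor_approx_itv/andP[? ?] := sub c1 ltac:(apply/andP; split; lra).
  have /cantor_approx_itv/andP[? ?] := sub c2 ltac:(apply/andP; split; lra).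
  rewrite expr0 mulr1; lra.
(* The interval lies in one of the two thirds, whose preimage is three times
   longer, or it contains 1/2, which lies in neither. *)
have [c2l|c2g] := ltP c2 (2/3).
  have : (3 * c2 - 3 * c1) * 3 ^+ n <= 1.
    apply: IH => [|d /andP[d1 d2]]; first lra.
    have /= [] := sub (d / 3) ltac:(apply/andP; split; lra).
      by case=> x xA xd; rewrite -[d](_ : x = d) //; lra.
    by case=> x /cantor_approx_itv /andP[? ?] ?; lra.
  by rewrite exprS; lra.
have [c1g|c1l] := ltP (1/3) c1.
  have : ((3 * c2 - 2) - (3 * c1 - 2)) * 3 ^+ n <= 1.
    apply: IH => [|d /andP[d1 d2]]; first lra.
    have /= [] := sub ((d + 2) / 3) ltac:(apply/andP; split; lra).
      by case=> x /cantor_approx_itv /andP[? ?] ?; lra.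
    by case=> x xA xd; rewrite -[d](_ : x = d) //; lra.
  by rewrite exprS; lra.
have /= [] := sub (1/2) ltac:(apply/andP; split; lra).
  by case=> x /cantor_approx_itv /andP[? ?] ?; lra.
by case=> x /cantor_approx_itv /andP[? ?] ?; lra.
Qed.

Lemma cantor_set_no_interval (c1 c2 : R) : c1 < c2 ->
  ~ (forall c, c1 <= c <= c2 -> cantor c).
Proof.
move=> c12 sub; pose n := (Num.Def.truncn ((c2 - c1)^-1)).+1.
have n_gt : (c2 - c1)^-1 < n%:R by apply: truncnS_gt.
have n_le : (n%:R : R) <= 3 ^+ n.
  by rewrite -natrX ler_nat ltnW // ltn_expl.
have := cantor_approx_interval_length c12 (fun c hc => sub c hc n I).
have c12_inv : (c2 - c1) * (c2 - c1)^-1 = 1 by rewrite divff // gt_eqF ?subr_gt0.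
nra.
Qed.

Lemma connected_cantor_set_eq (S : set R) x y : connected S -> S `<=` cantor ->
  S x -> S y -> x = y.
Proof.
move=> /connected_intervalP iS SC Sx Sy.
suff not_lt a b : S a -> S b -> ~ a < b.
  by apply/eqP; rewrite eq_le !leNgt; apply/andP; split; apply/negP;
    [exact: not_lt Sy Sx | exact: not_lt Sx Sy].
move=> Sa Sb ab.
exact: (cantor_set_no_interval ab (fun c hc => SC _ (iS a b Sa Sb c hc))).
Qed.

End CantorSet.

Section CantorFanModel.
Variable R : realType.
Local Notation cantor := (@cantor_set R).
Local Notation M := (@cantor_fan_model R).

(* [fan_point c t] is the point at height [t] of the leg of the model from the
   top (1/2, 0) to (c, 1); [fan_base] recovers [c] at positive heights. *)
Definition fan_point (c t : R) : R * R := ((1 - t) * 2^-1 + t * c, t).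
Definition fan_base (p : R * R) : R := (p.1 - (1 - p.2) * 2^-1) / p.2.
Definition fan_top : R * R := (2^-1, 0).

Lemma fan_baseK c t : t != 0 -> fan_base (fan_point c t) = c.
Proof. by move=> t0; rewrite /fan_base /fan_point /=; field. Qed.

Lemma cantor_fan_model_point c t : cantor c -> 0 <= t <= 1 -> M (fan_point c t).
Proof. by move=> cc t01; exists c, t; split => //; rewrite in_itv. Qed.

Lemma cantor_fan_modelP p : M p -> p.2 != 0 ->
  [/\ p = fan_point (fan_base p) p.2, cantor (fan_base p) & 0 < p.2 <= 1].
Proof.
move=> [c [t [cc]]]; rewrite in_itv /= => /andP[t0 t1] -> /= tn0.
have -> : fan_base ((1 - t) * 2^-1 + t * c, t) = c by exact: (fan_baseK c tn0).
by split => //; rewrite lt0r tn0 t0 t1.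
Qed.

Lemma cantor_fan_model_height0 p : M p -> p.2 = 0 -> p = fan_top.
Proof.
by move=> [c [t [cc _ ->]]] /= ->; rewrite /fan_top subr0 mul1r mul0r addr0.
Qed.

Lemma fan_base_continuous p : p.2 != 0 -> {for p, continuous fan_base}.
Proof.
move=> p2; apply: cvgM; last by apply: cvgV => //; exact: cvg_snd.
apply: cvgB; first exact: cvg_fst.
by apply: cvgM; [apply: cvgB; [exact: cvg_cst | exact: cvg_snd] | exact: cvg_cst].
Qed.

Lemma fan_point_continuous : continuous (fun ct : R * R => fan_point ct.1 ct.2).
Proof.
move=> ct; apply: (@cvg_pair _ _ _ _ (nbhs _) (nbhs _)); last exact: cvg_snd.
apply: cvgD; last by apply: cvgM; [exact: cvg_snd | exact: cvg_fst].
by apply: cvgM; [apply: cvgB; [exact: cvg_cst | exact: cvg_snd] | exact: cvg_cst].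
Qed.

Lemma fan_point_continuous_height c : continuous (fan_point c).
Proof.
move=> t; apply: (@cvg_pair _ _ _ _ (nbhs _) (nbhs _)); last exact: cvg_id.
apply: cvgD; last by apply: cvgM; [exact: cvg_id | exact: cvg_cst].
by apply: cvgM; [apply: cvgB; [exact: cvg_cst | exact: cvg_id] | exact: cvg_cst].
Qed.

Lemma nbhs_dist_lt (t eps : R) : 0 < eps -> \forall s \near t, `|s - t| < eps.
Proof.
by move=> e0; apply: filterS (nbhsx_ballx t eps e0) => s; rewrite /ball /= distrC.
Qed.

Lemma nbhs_height_lt (p : R * R) eps : 0 < eps -> \forall q \near p, `|q.2 - p.2| < eps.
Proof.
by move=> e0; exact: (@cvg_snd _ _ (nbhs p.1) (nbhs p.2) _ _ (nbhs_dist_lt p.2 e0)).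
Qed.

Lemma nbhs_fan_base_lt (p : R * R) eps : 0 < eps -> p.2 != 0 ->
  \forall q \near p, `|fan_base q - fan_base p| < eps.
Proof. by move=> e0 p0; exact: (fan_base_continuous p0 (nbhs_dist_lt _ e0)). Qed.

Lemma connected_cantor_fan_model D p : connected D -> D `<=` M -> ~ D fan_top ->
  D p ->
  (forall z, D z -> 0 < z.2 /\ z = fan_point (fan_base p) z.2) /\
  (forall q q' t, D q -> D q' -> q.2 <= t <= q'.2 -> D (fan_point (fan_base p) t)).
Proof.
move=> cD DM Dtop Dp.
have nz z : D z -> z.2 != 0.
  move=> Dz; apply/eqP => /(cantor_fan_model_height0 (DM _ Dz)) ztop.
  by rewrite -ztop in Dtop.
have base_eq z : D z -> fan_base z = fan_base p.
  move=> Dz; apply: (@connected_cantor_set_eq _ (fan_base @` D)); last 2 first.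
  - by exists z.
  - by exists p.
  - apply: connected_continuous_connected => //; apply: continuous_in_subspaceT.
    by move=> w /set_mem Dw; exact: fan_base_continuous (nz w Dw).
  - by move=> _ [w Dw <-]; have [] := cantor_fan_modelP (DM _ Dw) (nz _ Dw).
have onleg z : D z -> 0 < z.2 /\ z = fan_point (fan_base p) z.2.
  move=> Dz; have [zE _ /andP[z0 _]] := cantor_fan_modelP (DM _ Dz) (nz _ Dz).
  by rewrite -(base_eq z Dz).
split => // q q' t Dq Dq' /andP[qt tq'].
have : is_interval (snd @` D).
  apply/connected_intervalP; apply: connected_continuous_connected => //.
  by apply: continuous_subspaceT => w; exact: cvg_snd.
move=> /(_ q.2 q'.2 (ex_intro2 _ _ q Dq erefl) (ex_intro2 _ _ q' Dq' erefl) t).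
rewrite qt tq' => /(_ isT) [z Dz <-].
by rewrite -(onleg z Dz).2.
Qed.

End CantorFanModel.

Lemma itv_avoid_point (R : realType) (U : Type) (f : R -> U) (x y : R) (p : U) :
  x < y -> (forall s t, x <= s <= y -> x <= t <= y -> f s = f t -> s = t) ->
  exists a b, [/\ x <= a, a < b, b <= y & forall t, a <= t <= b -> f t <> p].
Proof.
move=> xy finj; pose m1 := x + (y - x) / 3; pose m2 := x + 2 * (y - x) / 3.
have [[t0 [/andP[t0x t0m] ft0]] | nohit] := pselect (exists t, x <= t <= m1 /\ f t = p).
  rewrite /m1 in t0m; exists m2, y; split; rewrite /m2; [lra | lra | lra |].
  move=> t /andP[? ?] ftp.
  have := finj t t0 ltac:(apply/andP; split; lra) ltac:(apply/andP; split; lra).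
  by rewrite ftp ft0 => /(_ erefl); lra.
exists x, m1; split; rewrite /m1; [lra | lra | lra |] => t ht ftp.
by apply: nohit; exists t.
Qed.

Lemma within_continuous_near {S U : topologicalType} (A : set S) (f : S -> U) x V :
  {within A, continuous f} -> A x -> nbhs (f x) V -> \forall y \near x, A y -> V (f y).
Proof. by move=> /subspace_continuousP fc Ax nV; exact: fc x Ax V nV. Qed.

Lemma within_continuous_comp_within {S U Y : topologicalType}
    (A : set S) (B : set U) (f : S -> U) (g : U -> Y) :
  {within A, continuous f} -> {within B, continuous g} ->
  (forall x, A x -> B (f x)) -> {within A, continuous (g \o f)}.
Proof.
move=> fc gc AB; apply/subspace_continuousP => x Ax V nV.
have := within_continuous_near fc Ax (within_continuous_near gc (AB x Ax) nV).
rewrite /= nbhs_simpl; apply: filterS => y /= fy Ay.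
exact: fy Ay (AB y Ay).
Qed.

Section EmbeddedCantorFan.
Variables (R : realType) (T : pseudoMetricType R).
Variables (C : set T) (h : R * R -> T) (g : T -> R * R).
Hypothesis hg : homeo_sets (@cantor_fan_model R) C h g.
Local Notation cantor := (@cantor_set R).
Local Notation M := (@cantor_fan_model R).
Local Notation leg c t := (h (fan_point c t)).

Lemma ghK p : M p -> g (h p) = p.
Proof. by case: hg => _ _ _ _ [+ _]; apply. Qed.

Lemma hgK z : C z -> h (g z) = z.
Proof. by case: hg => _ _ _ _ [_ +]; apply. Qed.

Lemma g_in_model z : C z -> M (g z).
Proof. by move=> Cz; case: hg => _ _ _ gCM _; apply: gCM; exists z. Qed.

Lemma h_in_C p : M p -> C (h p).
Proof. by move=> Mp; case: hg => _ _ hMC _ _; apply: hMC; exists p. Qed.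

Lemma h_continuous : {within M, continuous h}.
Proof. by case: hg. Qed.

Lemma g_continuous : {within C, continuous g}.
Proof. by case: hg. Qed.

Lemma height_continuous : {within C, continuous (fun z => (g z).2)}.
Proof.
have snd_continuous : continuous (fun p : R * R => p.2) by move=> p; exact: cvg_snd.
exact: (within_continuous_comp_within g_continuous
  (continuous_subspaceT (A := setT) snd_continuous) (fun _ _ => I)).
Qed.

Lemma leg_in_C c t : cantor c -> 0 <= t <= 1 -> C (leg c t).
Proof. by move=> cc t01; exact/h_in_C/cantor_fan_model_point. Qed.

Lemma g_leg c t : cantor c -> 0 <= t <= 1 -> g (leg c t) = fan_point c t.
Proof. by move=> cc t01; exact/ghK/cantor_fan_model_point. Qed.

Lemma leg_within_continuous c a b : cantor c -> 0 <= a -> b <= 1 ->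
  {within `[a, b]%classic, continuous (fun t => leg c t)}.
Proof.
move=> cc a0 b1; have abM t : `[a, b]%classic t -> M (fan_point c t).
  rewrite /= in_itv /= => /andP[? ?].
  by apply: cantor_fan_model_point => //; apply/andP; lra.
exact: (within_continuous_comp_within
  (continuous_subspaceT (@fan_point_continuous_height _ c)) h_continuous abM).
Qed.

Lemma leg_height_inj c s t : cantor c -> 0 <= s <= 1 -> 0 <= t <= 1 ->
  leg c s = leg c t -> s = t.
Proof.
by move=> cc s01 t01 /(congr1 (snd \o g)) /=; rewrite !g_leg.
Qed.

Lemma arc_contains_leg_segment A y0 y1 : A `<=` C -> arc_from A y0 y1 ->
  exists c a b, [/\ cantor c, 0 < a, a < b, b <= 1 &
    forall t, a <= t <= b -> A (leg c t)].
Proof.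
move=> AC [f [f' [[fc _ fA _ [f'f _]] _]]].
have itv01 s : 0 <= s <= 1 -> `[0, 1]%classic s by rewrite /= in_itv.
have fAs s : 0 <= s <= 1 -> A (f s).
  by move=> s01; apply: fA; exists s => //; exact: itv01.
have fC s : 0 <= s <= 1 -> C (f s) by move/fAs/AC.
pose phi := g \o f.
have phic : {within `[0, 1]%classic, continuous phi}.
  apply: within_continuous_comp_within fc g_continuous _.
  by move=> s; rewrite /= in_itv => /fC.
have phi_inj s s' : 0 <= s <= 1 -> 0 <= s' <= 1 -> phi s = phi s' -> s = s'.
  move=> s01 s'01 /(congr1 h); rewrite /phi /= !hgK; [|exact: fC..] => /(congr1 f').
  by rewrite !f'f ?itv01.
have [a [b [a0 ab b1 a_top]]] := itv_avoid_point (fan_top R) ltr01 phi_inj.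
have ab01 : `[a, b]%classic `<=` `[0, 1]%classic.
  by move=> s; rewrite /= !in_itv /= => /andP[? ?]; apply/andP; split; lra.
pose D := phi @` `[a, b]%classic.
have cD : connected D.
  apply: connected_continuous_connected; last exact: continuous_subspaceW ab01 phic.
  by apply/connected_intervalP; exact: interval_is_interval.
have inab s : `[a, b]%classic s -> 0 <= s <= 1 by move/ab01; rewrite /= in_itv.
have DM : D `<=` M by move=> _ [s /inab s01 <-]; exact/g_in_model/fC.
have DA z : D z -> A (h z).
  by move=> [s /inab s01 <-]; rewrite /phi /= hgK; [exact: fAs | exact: fC].
have Dtop : ~ D (fan_top R).
  by move=> [s]; rewrite /= in_itv => /a_top; apply.
have [Da Db] : D (phi a) /\ D (phi b).
  by split; [exists a | exists b]; rewrite //= in_itv /= lexx; apply/andP; lra.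
suff [u [w [Du Dw uw]]] : exists u w, [/\ D u, D w & u.2 < w.2].
  have [onleg span] := connected_cantor_fan_model cD DM Dtop Du.
  have [_ cu _] := cantor_fan_modelP (DM u Du) (lt0r_neq0 (onleg u Du).1).
  have [_ _ /andP[_ w1]] := cantor_fan_modelP (DM w Dw) (lt0r_neq0 (onleg w Dw).1).
  exists (fan_base u), u.2, w.2; split => //; first exact: (onleg u Du).1.
  by move=> t ut; apply/DA/(span u w).
have [onleg _] := connected_cantor_fan_model cD DM Dtop Da.
have : (phi a).2 != (phi b).2.
  apply/eqP => eab; suff /phi_inj : phi a = phi b by move=> /(_ _ _)/eqP; lra.
  by rewrite (onleg _ Da).2 (onleg _ Db).2 eab.
by case: ltgtP => // [lt | gt] _; [exists (phi a), (phi b) | exists (phi b), (phi a)].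
Qed.

Lemma leg_segment_arc c a b : cantor c -> 0 <= a -> a < b -> b <= 1 ->
  arc_from ((fun t => leg c t) @` `[a, b]%classic) (leg c a) (leg c b).
Proof.
move=> cc a0 ab b1.
have Mt t : a <= t <= b -> M (fan_point c t).
  by move=> /andP[? ?]; apply: cantor_fan_model_point => //; apply/andP; lra.
have aff s : 0 <= s <= 1 -> a <= a + s * (b - a) <= b.
  by move=> /andP[? ?]; apply/andP; split; nra.
have ba0 : b - a != 0 by rewrite subr_eq0 gt_eqF.
pose f s := leg c (a + s * (b - a)).
pose f' z := ((g z).2 - a) / (b - a).
have affc : continuous (fun s : R => a + s * (b - a)).
  by move=> s; apply: cvgD; [exact: cvg_cst | apply: cvgM; [exact: cvg_id | exact: cvg_cst]].
have heightc : continuous (fun p : R * R => (p.2 - a) / (b - a)).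
  by move=> p; apply: cvgM; [apply: cvgB; [exact: cvg_snd | exact: cvg_cst] | exact: cvg_cst].
have segC : (fun t => leg c t) @` `[a, b]%classic `<=` C.
  by move=> z [t]; rewrite /= in_itv => /Mt Mct <-; exact: h_in_C.
exists f, f'; split; [split|].
- apply: (within_continuous_comp_within
    (continuous_subspaceT (A := (`[0, 1]%classic : set R)) affc)
    (leg_within_continuous cc a0 b1)).
  by move=> s; rewrite /= !in_itv /= => /aff.
- exact: (within_continuous_comp_within (continuous_subspaceW segC g_continuous)
           (continuous_subspaceT (A := setT) heightc)).
- move=> z [s]; rewrite /= in_itv => /aff hs <-.
  by exists (a + s * (b - a)); rewrite //= in_itv.
- move=> z [y [t]]; rewrite /= in_itv /= => /[dup] /Mt Mct /andP[ta tb] <- <-.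
  rewrite /f' /= ghK //= in_itv /=; apply/andP; split; first by apply: divr_ge0; lra.
  by rewrite ler_pdivrMr ?mul1r; lra.
- split=> [s | z [t]]; rewrite /= in_itv.
    by move=> /aff/Mt Ms; rewrite /f' /f ghK //=; field.
  by move=> /Mt Mt' <-; rewrite /f' /f ghK //=; congr (h (fan_point c _)); field.
by rewrite /f /= mul0r addr0 mul1r; split => //; congr (h (fan_point c _)); ring.
Qed.

Lemma leg_interior_not_end_point X c a b t : X `<=` C -> cantor c ->
  0 <= a -> a < t -> t < b -> b <= 1 -> (forall s, a <= s <= b -> X (leg c s)) ->
  ~ end_points X (leg c t).
Proof.
move=> XC cc a0 at_ tb b1 segX [_ endX].
have in01 s : a <= s <= b -> 0 <= s <= 1 by move=> /andP[? ?]; apply/andP; lra.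
pose A := (fun s => leg c s) @` `[a, b]%classic.
have AX : A `<=` X by move=> z [s]; rewrite /= in_itv => /segX ? <-.
have Aleg s : a <= s <= b -> A (leg c s) by exists s; rewrite //= in_itv.
have [y [f [f' [[fc _ fA f'A [f'f ff']] [f0 _]]]]] :=
  endX A AX (ex_intro _ _ (ex_intro _ _ (leg_segment_arc cc a0 (lt_trans at_ tb) b1)))
    (Aleg t ltac:(apply/andP; lra)).
(* Removing the end point [f 0 = leg c t] from the arc leaves a connected set,
   whose heights would then form an interval containing a and b but not t. *)
have sub01 : `]0, 1]%classic `<=` (`[0, 1]%classic : set R).
  by move=> s; rewrite /= !in_itv /= => /andP[? ?]; apply/andP; lra.
pose heights := (fun s => (g (f s)).2) @` `]0, 1]%classic.
have iH : is_interval heights.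
  apply/connected_intervalP; apply: connected_continuous_connected.
    by apply/connected_intervalP; exact: interval_is_interval.
  apply: (within_continuous_comp_within (continuous_subspaceW sub01 fc) height_continuous).
  by move=> s /sub01 fs; apply/XC/AX/fA; exists s.
have in01t : 0 <= t <= 1 by apply: in01; apply/andP; lra.
have heights_leg s : a <= s <= b -> s != t -> heights s.
  move=> sab st; have As := Aleg s sab.
  have := f'A _ (ex_intro2 _ _ _ As erefl); rewrite /= in_itv /= => /andP[u0 u1].
  exists (f' (leg c s)); last by rewrite /= ff' // g_leg ?in01.
  rewrite /= in_itv /= u1 andbT lt0r u0 andbT; apply: contra st => /eqP u0'.
  apply/eqP/(leg_height_inj cc (in01 _ sab) in01t).
  by rewrite -(ff' _ As) u0' f0.
have [u u01 ut] := iH a b (heights_leg a ltac:(apply/andP; lra) (negbT (lt_eqF at_)))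
  (heights_leg b ltac:(apply/andP; lra) (negbT (gt_eqF tb))) t ltac:(apply/andP; lra).
have [s sab fu] : A (f u) by apply: fA; exists u => //; exact: sub01.
move: sab ut; rewrite /= in_itv /= => sab; rewrite -fu g_leg ?in01 //= => st.
have : f' (f u) = f' (f 0) by rewrite -fu st f0.
rewrite !f'f /= ?in_itv /= ?lexx ?ler01 //; last exact: sub01.
by move=> u0; move: u01; rewrite /= in_itv /= u0 ltxx.
Qed.

Lemma near_leg_within_continuous (Y : topologicalType) (S : set T) (f : T -> Y)
    c0 t0 V :
  C `<=` S -> {within S, continuous f} -> cantor c0 -> 0 <= t0 <= 1 ->
  nbhs (f (leg c0 t0)) V ->
  exists Q1 Q2, [/\ nbhs c0 Q1, nbhs t0 Q2 &
    forall c t, Q1 c -> Q2 t -> cantor c -> 0 <= t <= 1 -> V (f (leg c t))].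
Proof.
move=> CS fc cc0 t01 nV; have M0 := cantor_fan_model_point cc0 t01.
have nfh := within_continuous_near h_continuous M0
  (within_continuous_near fc (CS _ (h_in_C M0)) nV).
have [[Q1 Q2] /= [nQ1 nQ2] sQ] := @fan_point_continuous _ (c0, t0) _ nfh.
exists Q1, Q2; split => // c t Q1c Q2t cc t01'.
have Mct := cantor_fan_model_point cc t01'.
exact: sQ (c, t) (conj Q1c Q2t) Mct (CS _ (h_in_C Mct)).
Qed.

Section Retraction.
Variables (L W L' : set T) (v : T) (r : T -> T).
Local Notation K := (L' `&` W).
Local Notation outside := ((L `\` W) `|` [set v]).
Hypotheses (CW : C `<=` W) (WL : W `<=` L) (L'L : L' `<=` L) (KC : K `<=` C).
Hypothesis outside_closed : closed outside.
Hypotheses (rc : {within L, continuous r}) (rL : r @` L `<=` L').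
Hypothesis rK : forall y, L' y -> r y = y.

Lemma retraction_in_K y : L y -> ~ outside (r y) -> K (r y).
Proof.
move=> Ly out; have L'ry : L' (r y) by apply: rL; exists y.
split => //; apply: contrapT => nW; apply: out; left; split => //.
exact: L'L.
Qed.

Lemma leg_in_L c t : cantor c -> 0 <= t <= 1 -> L (leg c t).
Proof. by move=> cc t01; exact/WL/CW/leg_in_C. Qed.

Lemma retraction_near_leg c0 al be d : cantor c0 -> 0 <= al -> be <= 1 -> 0 < d ->
  (forall t, al <= t <= be -> K (leg c0 t) /\ leg c0 t <> v) ->
  \forall c \near within cantor (nbhs c0), forall t, al <= t <= be ->
    K (r (leg c t)) /\ `|(g (r (leg c t))).2 - t| < d.
Proof.
move=> cc0 al0 be1 d0 seg.
have in01 t : al <= t <= be -> 0 <= t <= 1 by move=> /andP[? ?]; apply/andP; lra.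
have d2 : 0 < d / 2 by lra.
have cover := (near_covering_withinP `[al, be]%classic).2
  ((compact_near_coveringP _).1 (@segment_compact R al be)).
apply: filterS (cover R _ (fun c t => K (r (leg c t)) /\ `|(g (r (leg c t))).2 - t| < d) _ _).
  by move=> c Pc t ht; apply: Pc; rewrite /= in_itv.
move=> t; rewrite /= in_itv /= => ht; have [Kt tv] := seg t ht.
have near_t : \forall z \near r (leg c0 t), ~ outside z /\ (C z -> `|(g z).2 - t| < d / 2).
  rewrite rK; last by case: Kt.
  apply: filterI.
    apply: open_nbhs_nbhs; split; first exact: closed_openC.
    by move=> [[_ /(_ Kt.2)] | /tv].
  have Nt : nbhs (g (leg c0 t)).2 [set s | `|s - t| < d / 2].
    by rewrite g_leg ?in01 //; exact: nbhs_dist_lt.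
  exact: within_continuous_near height_continuous (KC Kt) Nt.
have [Q1 [Q2 [nQ1 nQ2 sQ]]] :=
  near_leg_within_continuous (fun z Cz => WL (CW Cz)) rc cc0 (in01 t ht) near_t.
exists (Q2 `&` [set s | `|s - t| < d / 2], [set c | cantor c /\ Q1 c]).
  by split; [exact: filterI nQ2 (nbhs_dist_lt t d2) | apply: filterS nQ1].
move=> [s c] /= [[Q2s st] [cc Q1c]]; rewrite in_itv /= => hs.
have [out height_s] := sQ c s Q1c Q2s cc (in01 s hs).
have Kr := retraction_in_K (leg_in_L cc (in01 s hs)) out.
split => //; move: (height_s (KC Kr)) st.
by rewrite !ltr_norml => /andP[? ?] /andP[? ?]; apply/andP; split; lra.
Qed.

Lemma retracted_leg_not_end_point ce al be d te :
  cantor ce -> 0 < d -> d < al -> al + d < te -> te < be - d -> be <= 1 ->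
  (forall t, al <= t <= be -> K (r (leg ce t)) /\ `|(g (r (leg ce t))).2 - t| < d) ->
  K (leg ce te) -> ~ end_points K (leg ce te).
Proof.
move=> cce d0 dal alte tebe be1 near Kte.
have in01 t : al <= t <= be -> 0 <= t <= 1 by move=> /andP[? ?]; apply/andP; lra.
have itvP t : `[al, be]%classic t -> al <= t <= be by rewrite /= in_itv.
pose phi t := g (r (leg ce t)).
have phic : {within `[al, be]%classic, continuous phi}.
  have legc := leg_within_continuous cce (ltW (lt_trans d0 dal)) be1.
  have rlegc := within_continuous_comp_within legc rc
    (fun t ht => leg_in_L cce (in01 _ (itvP _ ht))).
  exact: within_continuous_comp_within rlegc g_continuous
    (fun t ht => KC (near t (itvP t ht)).1).
pose D := phi @` `[al, be]%classic.
have cD : connected D.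
  apply: connected_continuous_connected phic.
  by apply/connected_intervalP; exact: interval_is_interval.
have DM : D `<=` M by move=> _ [t /itvP /near [Kt _] <-]; exact/g_in_model/KC.
have DK z : D z -> K (h z).
  by move=> [t /itvP /near [Kt _] <-]; have := KC Kt; rewrite /phi => /hgK ->.
have Dpos z : D z -> 0 < z.2.
  move=> [t /itvP /[dup] /andP[alt _] /near [_]]; rewrite ltr_norml => /andP[lo _] <-.
  lra.
have Dtop : ~ D (fan_top R) by move=> /Dpos; rewrite /fan_top /= ltxx.
have hte : al <= te <= be by apply/andP; lra.
have Dte : D (fan_point ce te).
  exists te; first by rewrite /= in_itv.
  rewrite /phi rK; last by case: Kte.
  by rewrite g_leg //; exact: in01 hte.
have [onleg span] := connected_cantor_fan_model cD DM Dtop Dte.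
rewrite fan_baseK in span; last by rewrite gt_eqF //; lra.
have [Dal Dbe] : D (phi al) /\ D (phi be).
  by split; [exists al | exists be]; rewrite //= in_itv /=; apply/andP; split; lra.
have [alte' tebe'] : (phi al).2 < te /\ te < (phi be).2.
  have := (near al ltac:(apply/andP; lra)).2; have := (near be ltac:(apply/andP; lra)).2.
  by rewrite !ltr_norml => /andP[? ?] /andP[? ?]; split; lra.
have [_ _ /andP[_ be1']] := cantor_fan_modelP (DM _ Dbe) (lt0r_neq0 (Dpos _ Dbe)).
apply: (leg_interior_not_end_point KC cce (ltW (Dpos _ Dal)) alte' tebe' be1').
by move=> s hs; apply/DK/(span _ _ s Dal Dbe hs).
Qed.

Lemma no_retraction_leg_segment c0 al be : cantor c0 -> 0 < al -> al < be -> be <= 1 ->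
  (forall t, al <= t <= be -> K (leg c0 t) /\ leg c0 t <> v) ->
  ~ K `<=` closure (end_points K).
Proof.
move=> cc0 al0 albe be1 seg Kdense.
pose d := al * (be - al) / 4.
have d0 : 0 < d by rewrite /d; apply: divr_gt0; [apply: mulr_gt0|]; lra.
have dal : d < al by rewrite /d; nra.
have dbe : 4 * d <= be - al by rewrite /d; nra.
have [del del0 near] := (nbhs_ballP _ _).1 (retraction_near_leg cc0 (ltW al0) be1 d0 seg).
pose tm := (al + be) / 2.
have htm : al <= tm <= be by apply/andP; rewrite /tm; lra.
have [Ktm _] := seg tm htm.
have N : \forall q \near g (leg c0 tm), `|fan_base q - c0| < del /\ `|q.2 - tm| < d.
  rewrite g_leg //; last by apply/andP; lra.
  apply: filterI; last exact: nbhs_height_lt.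
  have tm0 : (fan_point c0 tm).2 != 0 by rewrite /= /tm gt_eqF //; lra.
  by have := nbhs_fan_base_lt del0 tm0; rewrite fan_baseK.
have [e [[Ke endK] Ne]] := Kdense _ Ktm _ (within_continuous_near g_continuous (KC Ktm) N).
have [base_e] := Ne (KC Ke); rewrite ltr_norml => /andP[te_lo te_hi].
have te0 : (g e).2 != 0 by rewrite gt_eqF //; rewrite /tm in te_lo; lra.
have [eE cce _] := cantor_fan_modelP (g_in_model (KC Ke)) te0.
have legE : leg (fan_base (g e)) (g e).2 = e by rewrite -eE hgK //; exact: KC.
have := retracted_leg_not_end_point (te := (g e).2) cce d0 dal _ _ be1
  (near (fan_base (g e)) _ cce).
rewrite legE; apply => //; rewrite /tm in te_lo te_hi; try lra.
by rewrite /ball /= distrC.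
Qed.

End Retraction.

End EmbeddedCantorFan.

Section LelekFan.
Variables (R : realType) (T : pseudoMetricType R) (X : set T).
Hypothesis lelekX : lelek_fan X.

Lemma lelek_fan_compact : compact X.
Proof. by case: lelekX => v [[[[[_ [cpt _]] _ _] _] _] _ _]. Qed.

Lemma lelek_fan_arc : exists A y0 y1, A `<=` X /\ arc_from A y0 y1.
Proof.
case: lelekX => v [_ [A1 [A2 [A3 [y1 [_ [_ [sub arcA1 _ _ _]]]]]]] _].
by exists A1, v, y1; split => // z A1z; apply: sub; left; left.
Qed.

Lemma lelek_fan_end_points_dense : X `<=` closure (end_points X).
Proof. by case: lelekX => v [_ _ ->]. Qed.

End LelekFan.

Theorem mainTheorem9 (R : realType) (T : pseudoMetricType R)
  (hT : hausdorff_space T) (L W L' C : set T) (v : T) :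
  lelek_fan_top L v ->
  wedge L W v ->
  L' `<=` L -> lelek_fan L' ->
  lelek_fan (L' `&` W) ->
  cantor_fan C -> L' `&` W `<=` C -> C `<=` W ->
  ~ exists r : T -> T, retraction L L' r.
Proof.
move=> _ [WL _ /lelek_fan_compact/(compact_closed hT) outside_closed] L'L _ lelekK
  [h [g hg]] KC CW [r [rc rL rK]].
have [A [y0 [y1 [AK arcA]]]] := lelek_fan_arc lelekK.
have [c0 [al [be [cc0 al0 albe be1 segA]]]] :=
  arc_contains_leg_segment hg (fun z Az => KC _ (AK _ Az)) arcA.
have in01 t : al <= t <= be -> 0 <= t <= 1 by move=> /andP[? ?]; apply/andP; lra.
have [a [b [ala ab bbe avoid_v]]] := itv_avoid_point v albe
  (fun s t hs ht => leg_height_inj hg cc0 (in01 s hs) (in01 t ht)).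
apply: (no_retraction_leg_segment hg CW WL L'L KC outside_closed rc rL rK cc0
  (lt_le_trans al0 ala) ab (le_trans bbe be1) _ (lelek_fan_end_points_dense lelekK)).
move=> t /andP[at_ tb]; split; last by apply: avoid_v; apply/andP.
by apply: AK; apply: segA; apply/andP; lra.
Qed.
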